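(* Fix an integer $M\ge2$ and constants $T_s,L_{s,d},L_{s,r},L_{r,d}>0$, $\delta\in(0,1]$, $\varrho\in(0,1)$. Put $g_{s,d}=\sin^2(\pi/M)T_sL_{s,d}$ and $g_{r,d}=\sin^2(\pi/M)T_sL_{s,r}L_{r,d}$. For $\bar\gamma>0$ set $\bar\gamma_{s,r}=\bar\gamma_{s,d}=\bar\gamma_{r,d}=P_s/N_0=\bar\gamma$, let $\epsilon$ be defined by $\bar\gamma^{ID}_{s,r}=\frac{2(1-\varrho)T_sL_{s,r}}{2-\varrho}\bar\gamma$ and $$\epsilon=\frac{1}{2(1+\bar\gamma^{ID}_{s,r})}\ (M=2),\qquad \epsilon=1.03\sqrt{\tfrac{1+\cos\frac{\pi}{M}}{2\cos\frac{\pi}{M}}}\Big[1-\sqrt{\tfrac{(1-\cos\frac{\pi}{M})\bar\gamma^{ID}_{s,r}}{1+(1-\cos\frac{\pi}{M})\bar\gamma^{ID}_{s,r}}}\Big]\ (M>2),$$ and $\eta=\ln\frac{(1-\epsilon)(M-1)}{\epsilon}$. Define $$a_1=\frac{\sqrt\pi\,(2g_{s,d})^{-1/4}}{4\bar\gamma}\Big(\frac{g_{s,d}}2+\bar\gamma^{-1}\Big)^{-3/4},\quad b_1=\frac14+\frac{\sqrt{g_{s,d}/2+\bar\gamma^{-1}}}{2\sqrt{2g_{s,d}}},$$ $$a_2=\frac{2\bar\gamma}{\delta g_{r,d}(g_{s,d}\bar\gamma+2)\bar\gamma^2},\quad b_2=\frac{\delta g_{r,d}\bar\gamma^2}{2\bar\gamma},$$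 $$Z_1=a_1\sqrt{2\eta}\,e^{-2b_1\eta},\quad Z_2=\frac{a_2}{\varrho}\ln(1+b_2\varrho),\quad Z_3=e^{\eta}Z_1,$$ $$\mathcal P_C=(1-\epsilon)(Z_1+Z_2),\qquad \mathcal P_E=\frac{\epsilon Z_3}{M-1}+\frac{\epsilon}{g_{s,d}\bar\gamma+2}.$$ Then $\mathcal P_C+\mathcal P_E$ (which is well defined and positive for all sufficiently large $\bar\gamma$) satisfies $$\lim_{\bar\gamma\to\infty}\frac{\ln(\mathcal P_C+\mathcal P_E)}{\ln\bar\gamma}=-2,$$ i.e. the diversity order is two.
   Context: $\mathcal P_C+\mathcal P_E$ is the paper's closed-form approximate average symbol error rate of its proposed detector at the destination of a three-node SWIPT-enabled differential decode-and-forward relay network with $M$-DPSK and power splitting ratio $\varrho$ at the relay, under Rayleigh fading with average SNRs $\bar\gamma_{s,r},\bar\gamma_{s,d},\bar\gamma_{r,d}$ (all set equal to $\bar\gamma$, with unit-mean channel gains so that $P_s/N_0=\bar\gamma$). *)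

From Stdlib Require Import Reals.
From Coquelicot Require Import Coquelicot.
Open Scope R_scope.

Section SER.
Variables (M : nat) (Ts Lsd Lsr Lrd delta rho : R).

Definition s2 : R := (sin (PI / INR M)) ^ 2.
Definition g_sd : R := s2 * Ts * Lsd.
Definition g_rd : R := s2 * Ts * Lsr * Lrd.
Definition cM : R := cos (PI / INR M).

Definition gamma_ID (g : R) : R := 2 * (1 - rho) * Ts * Lsr / (2 - rho) * g.

Definition eps (g : R) : R :=
  if Nat.eqb M 2 then 1 / (2 * (1 + gamma_ID g))
  else 1.03 * sqrt ((1 + cM) / (2 * cM)) *
       (1 - sqrt ((1 - cM) * gamma_ID g / (1 + (1 - cM) * gamma_ID g))).

Definition eta_arg (g : R) : R := (1 - eps g) * (INR M - 1) / eps g.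
Definition eta (g : R) : R := ln (eta_arg g).

Definition a1 (g : R) : R :=
  sqrt PI * Rpower (2 * g_sd) (-(1/4)) / (4 * g) * Rpower (g_sd / 2 + / g) (-(3/4)).
Definition b1 (g : R) : R := 1/4 + sqrt (g_sd / 2 + / g) / (2 * sqrt (2 * g_sd)).
Definition a2 (g : R) : R := 2 * g / (delta * g_rd * (g_sd * g + 2) * g ^ 2).
Definition b2 (g : R) : R := delta * g_rd * g ^ 2 / (2 * g).

Definition Z1 (g : R) : R := a1 g * sqrt (2 * eta g) * exp (- (2 * b1 g * eta g)).
Definition Z2 (g : R) : R := a2 g / rho * ln (1 + b2 g * rho).
Definition Z3 (g : R) : R := exp (eta g) * Z1 g.

Definition P_C (g : R) : R := (1 - eps g) * (Z1 g + Z2 g).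
Definition P_E (g : R) : R := eps g * Z3 g / (INR M - 1) + eps g / (g_sd * g + 2).

Definition SER (g : R) : R := P_C g + P_E g.
End SER.

(* Write [g] for the common average SNR.  The relay error probability [eps] behaves like
   [1/g], so [exp eta = (1 - eps) (M - 1) / eps] grows between linearly and quadratically
   in [g].  Substituting this into [Z3] shows that the error-propagation term
   [eps Z3 / (M - 1)] equals [(1 - eps) Z1], hence
       SER = (1 - eps) (2 Z1 + Z2) + eps / (gsd g + 2).
   Each of [Z1], [Z2] and the direct-link term is [O(ln g / g^2)], while [Z2] is at
   least of order [1/g^2].  A sandwich argument on [ln SER / ln g] then yields the limit
   [-2]. *)

From Stdlib Require Import Reals Lra Psatz.
From Coquelicot Require Import Coquelicot.
Open Scope R_scope.

Notation at_infinity := (Rbar_locally p_infty).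

Lemma at_infinity_gt (c : R) : at_infinity (fun g => c < g).
Proof. exists c; auto. Qed.

(* Eventually [ln g >= 1], which lets [1/g^n] be absorbed into [ln g / g^n]. *)
Lemma ln_ge_1_eventually : at_infinity (fun g => 1 <= ln g).
Proof.
  exists (exp 1); intros g hg.
  rewrite <- (ln_exp 1); apply ln_le; [apply exp_pos | lra].
Qed.

Definition log_pow_decay (n : nat) (f : R -> R) : Prop :=
  exists C, 0 < C /\ at_infinity (fun g => 0 <= f g <= C * ln g / g ^ n).

Lemma log_pow_decay_plus (n : nat) (f h : R -> R) :
  log_pow_decay n f -> log_pow_decay n h -> log_pow_decay n (fun g => f g + h g).
Proof.
  intros (Cf & hCf & hf) (Ch & hCh & hh); exists (Cf + Ch); split; [lra|].
  refine (filter_imp _ _ _ (filter_and _ _ hf hh)); intros g [[hf0 hf1] [hh0 hh1]].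
  split; [lra|].
  replace ((Cf + Ch) * ln g / g ^ n) with (Cf * ln g / g ^ n + Ch * ln g / g ^ n)
    by (unfold Rdiv; ring).
  lra.
Qed.

Lemma log_pow_decay_scale (n : nat) (k : R) (f : R -> R) :
  0 < k -> log_pow_decay n f -> log_pow_decay n (fun g => k * f g).
Proof.
  intros hk (C & hC & hf); exists (k * C); split; [nra|].
  refine (filter_imp _ _ _ hf); intros g [hf0 hf1].
  replace (k * C * ln g / g ^ n) with (k * (C * ln g / g ^ n)) by (unfold Rdiv; ring).
  split; [nra | apply Rmult_le_compat_l; lra].
Qed.

Lemma is_lim_const_div_ln (c : R) : is_lim (fun g => c / ln g) p_infty 0.
Proof.
  replace (Finite 0) with (Rbar_div c p_infty) by (simpl; f_equal; ring).
  apply is_lim_div; [apply is_lim_const | exact is_lim_ln_p | discriminate | exact I].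
Qed.

Lemma is_lim_ln_ln_div_ln : is_lim (fun g => ln (ln g) / ln g) p_infty 0.
Proof.
  apply (is_lim_comp (fun y => ln y / y) ln p_infty 0 p_infty).
  - exact is_lim_div_ln_p.
  - exact is_lim_ln_p.
  - exists 0; intros g _; discriminate.
Qed.

Lemma log_ratio_limit (f : R -> R) (n : nat) (A : R) : 0 < A ->
  at_infinity (fun g => A / g ^ n <= f g) -> log_pow_decay n f ->
  is_lim (fun g => ln (f g) / ln g) p_infty (- INR n).
Proof.
  intros hA hlow (B & hB & hdecay).
  set (err g := (ln (f g) + INR n * ln g) / ln g).
  assert (herr : is_lim err p_infty 0).
  { apply (is_lim_le_le_loc (fun g => ln A / ln g)
             (fun g => ln B / ln g + ln (ln g) / ln g)).
    - refine (filter_imp _ _ _ (filter_and _ _ (filter_and _ _ hlow hdecay)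
        (filter_and _ _ ln_ge_1_eventually (at_infinity_gt 0)))).
      intros g [[hlo [_ hhi]] [hlng hgpos]].
      assert (hgn : 0 < g ^ n) by (apply pow_lt; lra).
      assert (hlngn : ln (g ^ n) = INR n * ln g) by (apply ln_pow; lra).
      assert (hApos : 0 < A / g ^ n) by (apply Rdiv_lt_0_compat; lra).
      assert (hlo' : ln A - INR n * ln g <= ln (f g)).
      { rewrite <- hlngn, <- ln_div by lra. apply ln_le; lra. }
      assert (hhi' : ln (f g) <= ln B + ln (ln g) - INR n * ln g).
      { rewrite <- hlngn, <- ln_mult, <- ln_div by (try apply Rmult_lt_0_compat; lra).
        apply ln_le; lra. }
      assert (hinv : 0 <= / ln g) by (left; apply Rinv_0_lt_compat; lra).
      unfold err, Rdiv; rewrite <- Rmult_plus_distr_r.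
      split; apply Rmult_le_compat_r; lra.
    - apply is_lim_const_div_ln.
    - replace (Finite 0) with (Rbar_plus 0 0) by (simpl; f_equal; ring).
      apply is_lim_plus'; [apply is_lim_const_div_ln | apply is_lim_ln_ln_div_ln]. }
  apply (is_lim_ext_loc (fun g => err g + - INR n)).
  - exists 1; intros g hg. unfold err. field.
    rewrite <- ln_1; intro e; apply ln_inv in e; lra.
  - replace (Finite (- INR n)) with (Rbar_plus 0 (- INR n)) by (simpl; f_equal; ring).
    apply is_lim_plus'; [exact herr | apply is_lim_const].
Qed.

Lemma one_minus_sqrt_bounds (y : R) : 0 <= y <= 1 -> (1 - y) / 2 <= 1 - sqrt y <= 1 - y.
Proof.
  intros [h0 h1].
  pose proof (sqrt_sqrt y h0). pose proof (sqrt_pos y).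
  assert (sqrt y <= 1) by (rewrite <- sqrt_1; apply sqrt_le_1_alt; lra).
  split; nra.
Qed.

Lemma half_inv_one_plus_bounds (x : R) : 1 <= x -> / (4 * x) <= / (2 * (1 + x)) <= / (2 * x).
Proof. intros hx; split; apply Rinv_le_contravar; lra. Qed.

Lemma one_minus_sqrt_ratio_bounds (x : R) : 1 <= x -> / (4 * x) <= 1 - sqrt (x / (1 + x)) <= / x.
Proof.
  intros hx.
  assert (hy : 0 <= x / (1 + x) <= 1).
  { split; [apply Rdiv_le_0_compat; lra|].
    apply Rmult_le_reg_r with (1 + x); [lra|]. field_simplify; lra. }
  assert (e : 1 - x / (1 + x) = / (1 + x)) by (field; lra).
  destruct (one_minus_sqrt_bounds _ hy) as [lo hi]; rewrite e in lo, hi.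
  assert (/ (4 * x) <= / (1 + x) / 2).
  { unfold Rdiv; rewrite <- Rinv_mult; apply Rinv_le_contravar; lra. }
  assert (/ (1 + x) <= / x) by (apply Rinv_le_contravar; lra).
  lra.
Qed.

Lemma INR_ge2 (M : nat) : (2 <= M)%nat -> 2 <= INR M.
Proof. intros h; apply le_INR in h; simpl in h; lra. Qed.

Lemma pi_div_bounds (M : nat) : (2 <= M)%nat -> 0 < PI / INR M <= PI / 2.
Proof.
  intros h; pose proof (INR_ge2 M h); pose proof PI_RGT_0.
  split; [apply Rdiv_lt_0_compat; lra|].
  unfold Rdiv; apply Rmult_le_compat_l; [lra|]; apply Rinv_le_contravar; lra.
Qed.

Lemma prod3_le (a b c x y z : R) :
  0 <= a <= x -> 0 <= b <= y -> 0 <= c <= z -> 0 <= a * b * c <= x * y * z.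
Proof.
  intros ha hb hc; split; [apply Rmult_le_pos; [apply Rmult_le_pos|]; lra|].
  apply Rmult_le_compat; try lra; [apply Rmult_le_pos; lra | apply Rmult_le_compat; lra].
Qed.

Lemma exp_le_compat (x y : R) : x <= y -> exp x <= exp y.
Proof.
  intros h; destruct (Rle_lt_or_eq_dec x y h) as [hlt | ->];
    [left; apply exp_increasing | right]; auto.
Qed.

Lemma mul_bounds_of_div_bounds (a b x g : R) : 0 < g -> a / g <= x <= b / g -> a <= x * g <= b.
Proof.
  intros hg [hlo hhi].
  replace a with (a / g * g) by (field; lra); replace b with (b / g * g) by (field; lra).
  split; apply Rmult_le_compat_r; lra.
Qed.

Lemma gt_inv_threshold (c g : R) : 0 < c -> / c < g -> 1 < c * g.
Proof.
  intros hc hg; apply Rmult_lt_compat_l with (r := c) in hg; [|lra].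
  rewrite Rinv_r in hg; lra.
Qed.

Section SERAsymptotics.

Variables (M : nat) (Ts Lsd Lsr Lrd delta rho : R).
Hypotheses (hM : (2 <= M)%nat) (hTs : 0 < Ts) (hLsd : 0 < Lsd) (hLsr : 0 < Lsr)
  (hLrd : 0 < Lrd) (hdelta : 0 < delta) (hrho : 0 < rho < 1).

Local Notation gsd := (g_sd M Ts Lsd).
Local Notation grd := (g_rd M Ts Lsr Lrd).
Local Notation Eps := (eps M Ts Lsr rho).

Lemma s2_pos : 0 < s2 M.
Proof.
  destruct (pi_div_bounds M hM); pose proof PI_RGT_0.
  assert (0 < sin (PI / INR M)) by (apply sin_gt_0; lra).
  unfold s2; simpl; nra.
Qed.

Lemma g_sd_pos : 0 < gsd.
Proof. pose proof s2_pos; unfold g_sd; apply Rmult_lt_0_compat; [apply Rmult_lt_0_compat|]; lra. Qed.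

Lemma g_rd_pos : 0 < grd.
Proof.
  pose proof s2_pos; unfold g_rd.
  apply Rmult_lt_0_compat; [apply Rmult_lt_0_compat; [apply Rmult_lt_0_compat|]|]; lra.
Qed.

Lemma cM_bounds : (3 <= M)%nat -> 0 < cM M < 1.
Proof.
  intros h3; unfold cM.
  assert (hx : 0 < PI / INR M < PI / 2).
  { apply le_INR in h3; simpl in h3; pose proof PI_RGT_0.
    split; [apply Rdiv_lt_0_compat; lra|].
    apply Rmult_lt_reg_r with (INR M); [lra|].
    unfold Rdiv; rewrite Rmult_assoc, Rinv_l by lra; nra. }
  assert (0 < cos (PI / INR M)) by (apply cos_gt_0; lra).
  assert (0 < sin (PI / INR M)) by (apply sin_gt_0; lra).
  pose proof (sin2_cos2 (PI / INR M)) as e; unfold Rsqr in e.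
  split; nra.
Qed.

Lemma gamma_ID_slope : exists c, 0 < c /\ forall g, gamma_ID Ts Lsr rho g = c * g.
Proof.
  exists (2 * (1 - rho) * Ts * Lsr / (2 - rho)); split; [|reflexivity].
  apply Rdiv_lt_0_compat; [repeat apply Rmult_lt_0_compat|]; lra.
Qed.

Lemma eps_order : exists e1 e2, 0 < e1 /\ 0 < e2 /\
  at_infinity (fun g => e1 / g <= Eps g <= e2 / g).
Proof.
  destruct gamma_ID_slope as [c [hc hID]].
  unfold eps; destruct (Nat.eqb M 2) eqn:hM2.
  - exists (/ (4 * c)), (/ (2 * c)); split; [|split];
      try (apply Rinv_0_lt_compat; lra).
    exists (/ c); intros g hg; rewrite hID.
    pose proof (gt_inv_threshold c g hc hg).
    replace (/ (4 * c) / g) with (/ (4 * (c * g))) by (field; nra).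
    replace (/ (2 * c) / g) with (/ (2 * (c * g))) by (field; nra).
    rewrite Rdiv_1_l; apply half_inv_one_plus_bounds; lra.
  - apply Nat.eqb_neq in hM2.
    destruct cM_bounds as [hc0 hc1]; [lia|].
    set (k := 1.03 * sqrt ((1 + cM M) / (2 * cM M))).
    assert (hk : 0 < k).
    { apply Rmult_lt_0_compat; [lra|]; apply sqrt_lt_R0, Rdiv_lt_0_compat; lra. }
    set (d := (1 - cM M) * c).
    assert (hd : 0 < d) by (unfold d; nra).
    exists (k / (4 * d)), (k / d); split; [|split]; try (apply Rdiv_lt_0_compat; lra).
    exists (/ d); intros g hg; rewrite hID.
    pose proof (gt_inv_threshold d g hd hg).
    replace ((1 - cM M) * (c * g)) with (d * g) by (unfold d; ring).
    replace (k / (4 * d) / g) with (k * / (4 * (d * g))) by (field; nra).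
    replace (k / d / g) with (k * / (d * g)) by (field; nra).
    destruct (one_minus_sqrt_ratio_bounds (d * g)); [lra|].
    split; apply Rmult_le_compat_l; lra.
Qed.

Local Notation EtaArg := (eta_arg M Ts Lsr rho).
Local Notation Eta := (eta M Ts Lsr rho).

Lemma eps_small : at_infinity (fun g => 0 < Eps g <= 1 / 4).
Proof.
  destruct eps_order as (e1 & e2 & he1 & he2 & hbounds).
  refine (filter_imp _ _ _ (filter_and _ _ hbounds (at_infinity_gt (4 * e2)))).
  intros g [[hlo hhi] hg].
  assert (0 < e1 / g) by (apply Rdiv_lt_0_compat; lra).
  assert (e2 / g <= 1 / 4) by (apply Rmult_le_reg_r with g; [lra|]; field_simplify; lra).
  lra.
Qed.

Lemma eta_arg_order : exists c, 0 < c /\ at_infinity (fun g => c * g <= EtaArg g <= g * g).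
Proof.
  destruct eps_order as (e1 & e2 & he1 & he2 & hbounds).
  set (m := INR M - 1).
  assert (hm : 1 <= m) by (unfold m; pose proof (INR_ge2 M hM); lra).
  exists (3 / (4 * e2)); split; [apply Rdiv_lt_0_compat; lra|].
  refine (filter_imp _ _ _
    (filter_and _ _ (filter_and _ _ hbounds eps_small) (at_infinity_gt (m / e1)))).
  intros g [[[hlo hhi] [hE0 hE1]] hg].
  assert (hgpos : 0 < g) by (pose proof (Rdiv_lt_0_compat m e1 ltac:(lra) he1); lra).
  destruct (mul_bounds_of_div_bounds e1 e2 (Eps g) g hgpos (conj hlo hhi)) as [hloE hhiE].
  assert (hmg : m <= e1 * g) by (apply Rmult_lt_compat_l with (r := e1) in hg; [|lra];
    replace (e1 * (m / e1)) with m in hg by (field; lra); lra).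
  assert (hc_lo : 3 / (4 * e2) * g * Eps g <= (1 - Eps g) * m).
  { replace (3 / (4 * e2) * g * Eps g) with (3 / 4 * (Eps g * g / e2)) by (field; lra).
    assert (Eps g * g / e2 <= 1) by (apply Rmult_le_reg_r with e2; [lra|]; field_simplify; lra).
    nra. }
  assert (hc_hi : (1 - Eps g) * m <= g * g * Eps g) by nra.
  assert (hinv : 0 <= / Eps g) by (left; apply Rinv_0_lt_compat; lra).
  unfold eta_arg; fold m; split.
  - replace (3 / (4 * e2) * g) with (3 / (4 * e2) * g * Eps g / Eps g) by (field; lra).
    apply Rmult_le_compat_r; lra.
  - replace (g * g) with (g * g * Eps g / Eps g) by (field; lra).
    apply Rmult_le_compat_r; lra.
Qed.

Lemma eta_bounds : exists C, 0 < C /\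
  at_infinity (fun g => (0 < Eta g <= 2 * ln g) /\ exp (- Eta g) <= C / g).
Proof.
  destruct eta_arg_order as (c & hc & hbounds).
  exists (/ c); split; [apply Rinv_0_lt_compat; lra|].
  refine (filter_imp _ _ _ (filter_and _ _ hbounds (at_infinity_gt (/ c)))).
  intros g [[hlo hhi] hg].
  pose proof (gt_inv_threshold c g hc hg).
  assert (hgpos : 0 < g) by nra.
  unfold eta; split; [split|].
  - rewrite <- ln_1; apply ln_increasing; lra.
  - replace (2 * ln g) with (ln (g * g)) by (rewrite ln_mult; lra).
    apply ln_le; lra.
  - rewrite exp_Ropp, exp_ln by lra.
    replace (/ c / g) with (/ (c * g)) by (field; lra).
    apply Rinv_le_contravar; lra.
Qed.

Lemma a1_upper : exists A, 0 < A /\ forall g, 0 < g -> 0 <= a1 M Ts Lsd g <= A / g.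
Proof.
  pose proof g_sd_pos as hgsd.
  set (A := sqrt PI * Rpower (2 * gsd) (- (1 / 4)) / 4 * Rpower (gsd / 2) (- (3 / 4))).
  assert (hp1 : 0 < Rpower (2 * gsd) (- (1 / 4))) by apply exp_pos.
  assert (hp2 : 0 < Rpower (gsd / 2) (- (3 / 4))) by apply exp_pos.
  pose proof (sqrt_lt_R0 PI PI_RGT_0) as hpi.
  exists A; split; [unfold A; repeat apply Rmult_lt_0_compat; lra|].
  intros g hg; unfold a1.
  assert (hinvg : 0 < / g) by (apply Rinv_0_lt_compat; lra).
  assert (0 < Rpower (gsd / 2 + / g) (- (3 / 4))) by apply exp_pos.
  assert (hmono : Rpower (gsd / 2 + / g) (- (3 / 4)) <= Rpower (gsd / 2) (- (3 / 4))).
  { rewrite !Rpower_Ropp; apply Rinv_le_contravar; [apply exp_pos|].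
    apply Rle_Rpower_l; lra. }
  assert (hfactor : 0 <= sqrt PI * Rpower (2 * gsd) (- (1 / 4)) / (4 * g))
    by (apply Rdiv_le_0_compat; nra).
  replace (A / g) with
    (sqrt PI * Rpower (2 * gsd) (- (1 / 4)) / (4 * g) * Rpower (gsd / 2) (- (3 / 4)))
    by (unfold A; field; lra).
  split; [apply Rmult_le_pos | apply Rmult_le_compat_l]; lra.
Qed.

(* The exponent rate [b1] is at least [1/2], since [sqrt (gsd/2 + 1/g) >= sqrt (2 gsd) / 2]. *)
Lemma b1_ge_half (g : R) : 0 < g -> 1 / 2 <= b1 M Ts Lsd g.
Proof.
  intros hg; pose proof g_sd_pos as hgsd; unfold b1.
  set (u := gsd / 2 + / g).
  assert (hu : gsd / 2 < u) by (unfold u; pose proof (Rinv_0_lt_compat g hg); lra).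
  pose proof (sqrt_sqrt u ltac:(lra)); pose proof (sqrt_pos u).
  pose proof (sqrt_sqrt (2 * gsd) ltac:(lra)); pose proof (sqrt_lt_R0 (2 * gsd) ltac:(lra)).
  assert (sqrt (2 * gsd) <= 2 * sqrt u) by nra.
  apply Rmult_le_reg_r with (2 * sqrt (2 * gsd)); [lra|].
  field_simplify; lra.
Qed.

(* [Z1 = a1 * sqrt (2 eta) * exp (-2 b1 eta)]: the factors are [O(1/g)], [O(ln g)], [O(1/g)]. *)
Lemma Z1_decay : log_pow_decay 2 (Z1 M Ts Lsd Lsr rho).
Proof.
  destruct a1_upper as (A & hA & ha1).
  destruct eta_bounds as (C & hC & heta).
  exists (A * 2 * C); split; [nra|].
  refine (filter_imp _ _ _
    (filter_and _ _ heta (filter_and _ _ ln_ge_1_eventually (at_infinity_gt 0)))).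
  intros g [[[heta0 heta1] hexp] [hln hg]].
  assert (hsqrt : 0 <= sqrt (2 * Eta g) <= 2 * ln g).
  { split; [apply sqrt_pos|].
    rewrite <- (sqrt_Rsqr (2 * ln g)) by lra; apply sqrt_le_1_alt.
    unfold Rsqr; nra. }
  assert (hdecay : 0 <= exp (- (2 * b1 M Ts Lsd g * Eta g)) <= C / g).
  { split; [left; apply exp_pos|].
    apply Rle_trans with (exp (- Eta g)); [|exact hexp].
    pose proof (b1_ge_half g hg); apply exp_le_compat; nra. }
  pose proof (prod3_le _ _ _ _ _ _ (ha1 g hg) hsqrt hdecay) as hprod.
  unfold Z1; fold (Eta g).
  replace (A * 2 * C * ln g / g ^ 2) with (A / g * (2 * ln g) * (C / g)) by (field; lra).
  exact hprod.
Qed.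

(* Since [exp eta = (1 - eps) (M - 1) / eps], the error-propagation term [eps Z3 / (M-1)]
   coincides with [(1 - eps) Z1]. *)
Lemma Z3_term_identity (g : R) : 0 < Eps g < 1 ->
  Eps g * Z3 M Ts Lsd Lsr rho g / (INR M - 1) = (1 - Eps g) * Z1 M Ts Lsd Lsr rho g.
Proof.
  intros hE; pose proof (INR_ge2 M hM).
  assert (0 < EtaArg g) by (unfold eta_arg; apply Rdiv_lt_0_compat; nra).
  unfold Z3, eta; rewrite exp_ln by lra; unfold eta_arg; field; lra.
Qed.

Lemma ln_one_plus_linear_bounds (k : R) : 0 < k ->
  at_infinity (fun g => 1 <= ln (1 + k * g) <= 2 * ln g).
Proof.
  intros hk; exists (Rmax (3 / k) (1 + k)); intros g hg.
  assert (h3 : 3 / k < g) by (eapply Rle_lt_trans; [apply Rmax_l | exact hg]).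
  assert (h1k : 1 + k < g) by (eapply Rle_lt_trans; [apply Rmax_r | exact hg]).
  assert (hkg : 3 <= k * g)
    by (apply Rmult_lt_compat_l with (r := k) in h3; [|lra];
        replace (k * (3 / k)) with 3 in h3 by (field; lra); lra).
  pose proof exp_le_3.
  split.
  - rewrite <- (ln_exp 1) at 1; apply ln_le; [apply exp_pos | lra].
  - replace (2 * ln g) with (ln (g * g)) by (rewrite ln_mult; lra).
    apply ln_le; nra.
Qed.

Lemma relay_gain_pos : 0 < delta * grd * rho.
Proof. pose proof g_rd_pos; apply Rmult_lt_0_compat; [apply Rmult_lt_0_compat|]; lra. Qed.

Lemma Z2_closed_form (g : R) : 0 < g ->
  Z2 M Ts Lsd Lsr Lrd delta rho g
  = 2 / (delta * grd * rho) * ln (1 + delta * grd * rho / 2 * g) / ((gsd * g + 2) * g).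
Proof.
  intros hg; pose proof g_sd_pos; pose proof g_rd_pos.
  unfold Z2, a2, b2.
  replace (delta * grd * g ^ 2 / (2 * g) * rho) with (delta * grd * rho / 2 * g)
    by (field; lra).
  field; repeat split; nra.
Qed.

Lemma Z2_lower : exists c, 0 < c /\ at_infinity (fun g => c / g ^ 2 <= Z2 M Ts Lsd Lsr Lrd delta rho g).
Proof.
  pose proof g_sd_pos; pose proof relay_gain_pos.
  set (K := 2 / (delta * grd * rho)).
  assert (hK : 0 < K) by (unfold K; apply Rdiv_lt_0_compat; lra).
  exists (K / (gsd + 2)); split; [apply Rdiv_lt_0_compat; lra|].
  assert (hk : 0 < delta * grd * rho / 2) by lra.
  refine (filter_imp _ _ _ (filter_and _ _ (ln_one_plus_linear_bounds _ hk) (at_infinity_gt 1))).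
  intros g [[hln _] hg].
  rewrite Z2_closed_form by lra; fold K.
  apply Rle_trans with (K * 1 / ((gsd * g + 2) * g)).
  - replace (K / (gsd + 2) / g ^ 2) with (K * 1 / ((gsd + 2) * g * g)) by (field; lra).
    unfold Rdiv; apply Rmult_le_compat_l; [lra|]; apply Rinv_le_contravar; nra.
  - unfold Rdiv; apply Rmult_le_compat_r; [left; apply Rinv_0_lt_compat; nra|].
    apply Rmult_le_compat_l; lra.
Qed.

Lemma Z2_decay : log_pow_decay 2 (Z2 M Ts Lsd Lsr Lrd delta rho).
Proof.
  pose proof g_sd_pos; pose proof relay_gain_pos.
  set (K := 2 / (delta * grd * rho)).
  assert (hK : 0 < K) by (unfold K; apply Rdiv_lt_0_compat; lra).
  exists (2 * K / gsd); split; [apply Rdiv_lt_0_compat; lra|].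
  assert (hk : 0 < delta * grd * rho / 2) by lra.
  refine (filter_imp _ _ _ (filter_and _ _ (ln_one_plus_linear_bounds _ hk) (at_infinity_gt 1))).
  intros g [[hln1 hln2] hg].
  rewrite Z2_closed_form by lra; fold K.
  assert (hgsdg : 0 < gsd * g) by nra.
  assert (hden : 0 < / ((gsd * g + 2) * g)) by (apply Rinv_0_lt_compat; nra).
  split; [unfold Rdiv; apply Rmult_le_pos; nra|].
  apply Rle_trans with (K * (2 * ln g) / (gsd * g * g)).
  - unfold Rdiv; apply Rmult_le_compat; [nra | lra | apply Rmult_le_compat_l; lra |].
    apply Rinv_le_contravar; nra.
  - right; field; lra.
Qed.

Lemma direct_term_decay : log_pow_decay 2 (fun g => Eps g / (gsd * g + 2)).
Proof.
  pose proof g_sd_pos.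
  destruct eps_order as (e1 & e2 & he1 & he2 & hbounds).
  exists (e2 / gsd); split; [apply Rdiv_lt_0_compat; lra|].
  refine (filter_imp _ _ _ (filter_and _ _ (filter_and _ _ hbounds eps_small)
    (filter_and _ _ ln_ge_1_eventually (at_infinity_gt 0)))).
  intros g [[[_ hhi] [hE0 _]] [hln hg]].
  split; [apply Rdiv_le_0_compat; nra|].
  apply Rle_trans with (e2 / g / (gsd * g)).
  - unfold Rdiv; apply Rmult_le_compat; try lra;
      [left; apply Rinv_0_lt_compat; nra | apply Rinv_le_contravar; nra].
  - replace (e2 / g / (gsd * g)) with (e2 / gsd * 1 / g ^ 2) by (field; lra).
    unfold Rdiv; apply Rmult_le_compat_r; [left; apply Rinv_0_lt_compat; nra|].
    apply Rmult_le_compat_l; [left; apply Rdiv_lt_0_compat|]; lra.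
Qed.

Local Notation SERg := (SER M Ts Lsd Lsr Lrd delta rho).

Lemma SER_decomposition (g : R) : 0 < Eps g < 1 ->
  SERg g = (1 - Eps g) * (2 * Z1 M Ts Lsd Lsr rho g + Z2 M Ts Lsd Lsr Lrd delta rho g)
           + Eps g / (gsd * g + 2).
Proof.
  intros hE; unfold SER, P_C, P_E; fold (Eps g).
  rewrite (Z3_term_identity g hE); ring.
Qed.

(* Lower bound of order [1/g^2]: all terms are nonnegative and [(1 - eps) Z2 >= (3/4) Z2]. *)
Lemma SER_lower : exists A, 0 < A /\ at_infinity (fun g => A / g ^ 2 <= SERg g).
Proof.
  destruct Z2_lower as (c & hc & hZ2).
  destruct Z1_decay as (C1 & _ & hZ1); destruct direct_term_decay as (C3 & _ & hdirect).
  exists (3 / 4 * c); split; [lra|].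
  refine (filter_imp _ _ _ (filter_and _ _ (filter_and _ _ hZ2 hZ1)
    (filter_and _ _ (filter_and _ _ hdirect eps_small) (at_infinity_gt 0)))).
  intros g [[hz2 [hz1 _]] [[[hd _] hE] hg]].
  rewrite SER_decomposition by lra.
  replace (3 / 4 * c / g ^ 2) with (3 / 4 * (c / g ^ 2)) by (unfold Rdiv; ring).
  assert (0 <= c / g ^ 2) by (apply Rdiv_le_0_compat; [lra | apply pow_lt; lra]).
  nra.
Qed.

(* Upper bound of order [ln g / g^2], using [0 <= 1 - eps <= 1]. *)
Lemma SER_decay : log_pow_decay 2 SERg.
Proof.
  assert (hsum : log_pow_decay 2 (fun g => 2 * Z1 M Ts Lsd Lsr rho g
           + Z2 M Ts Lsd Lsr Lrd delta rho g + Eps g / (gsd * g + 2))).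
  { apply log_pow_decay_plus; [apply log_pow_decay_plus|];
      [apply log_pow_decay_scale; [lra | apply Z1_decay] | apply Z2_decay | apply direct_term_decay]. }
  destruct hsum as (C & hC & hbound).
  destruct Z1_decay as (C1 & _ & hZ1); destruct Z2_decay as (C2 & _ & hZ2).
  destruct direct_term_decay as (C3 & _ & hdirect).
  exists C; split; [exact hC|].
  refine (filter_imp _ _ _ (filter_and _ _ (filter_and _ _ hbound eps_small)
    (filter_and _ _ (filter_and _ _ hZ1 hZ2) hdirect))).
  intros g [[[_ hsum] hE] [[[hz1 _] [hz2 _]] [hd _]]].
  rewrite SER_decomposition by lra.
  split; nra.
Qed.

Lemma SER_regime : at_infinity (fun g => 0 < Eps g < 1 /\ 0 < Eta g /\ 0 < SERg g).
Proof.
  destruct SER_lower as (A & hA & hlow); destruct eta_bounds as (C & _ & heta).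
  refine (filter_imp _ _ _ (filter_and _ _ (filter_and _ _ eps_small heta)
    (filter_and _ _ hlow (at_infinity_gt 0)))).
  intros g [[hE [[heta0 _] _]] [hser hg]].
  assert (0 < A / g ^ 2) by (apply Rdiv_lt_0_compat; [lra | apply pow_lt; lra]).
  repeat split; lra.
Qed.

End SERAsymptotics.

Theorem mainTheorem3 (M : nat) (Ts Lsd Lsr Lrd delta rho : R)
  (hM : (2 <= M)%nat) (hTs : 0 < Ts) (hLsd : 0 < Lsd) (hLsr : 0 < Lsr)
  (hLrd : 0 < Lrd) (hdelta : 0 < delta <= 1) (hrho : 0 < rho < 1) :
  (exists g0 : R, forall g : R, g0 < g ->
      0 < eps M Ts Lsr rho g < 1 /\
      0 < eta M Ts Lsr rho g /\
      0 < SER M Ts Lsd Lsr Lrd delta rho g) /\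
  is_lim (fun g => ln (SER M Ts Lsd Lsr Lrd delta rho g) / ln g) p_infty (-2).
Proof.
  destruct hdelta as [hdelta _].
  split.
  - exact (SER_regime M Ts Lsd Lsr Lrd delta rho hM hTs hLsd hLsr hLrd hdelta hrho).
  - destruct (SER_lower M Ts Lsd Lsr Lrd delta rho hM hTs hLsd hLsr hLrd hdelta hrho)
      as (A & hA & hlow).
    replace (-2) with (- INR 2) by (simpl; ring).
    exact (log_ratio_limit _ 2 A hA hlow
      (SER_decay M Ts Lsd Lsr Lrd delta rho hM hTs hLsd hLsr hLrd hdelta hrho)).
Qed.
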